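(* For every integer $n\ge 0$, $$\sum_{k=0}^n(-1)^k\binom nk C_k\binom{2n-2k}{n-k}=\binom{n}{\lfloor n/2\rfloor}^2 .$$
   Context: $C_k=\binom{2k}{k}\frac{1}{k+1}$ denotes the $k$-th Catalan number. *)

From mathcomp Require Import all_boot all_order all_algebra.
Set Implicit Arguments. Unset Strict Implicit. Unset Printing Implicit Defensive.

(* k-th Catalan number C_k = binom(2k,k)/(k+1); the division is exact. *)
Definition catalan (k : nat) : nat := 'C(k.*2, k) %/ k.+1.

From mathcomp Require Import all_boot all_order all_algebra ring zify.
Import GRing.Theory Num.Theory.
Local Open Scope ring_scope.

(* Work in R[y] with a parameter a in R and compare the y^n-coefficients of the two sides of
   (a (1 + y)^2 - (1 + a)^2 y)^n = (a - y)^n (1 - a y)^n.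
   Expanding the left side by the binomial theorem gives
   sum_k (-1)^k C(n,k) C(2n-2k,n-k) a^(n-k) (1 + a)^(2k); the right side gives
   (-1)^n sum_j C(n,j)^2 a^(2j).  Specialise a to the variable x of Z[x], multiply by 1 - x and
   read off the x^n-coefficient: on the left, [x^k] (1 - x)(1 + x)^(2k) = C(2k,k) - C(2k,k-1)
   is the Catalan number C_k; on the right only the term with 2j = n or 2j = n - 1 survives,
   leaving C(n, floor(n/2))^2. *)

Lemma catalanS_bin k : (catalan k.+1 + 'C(k.+1.*2, k) = 'C(k.+1.*2, k.+1))%N.
Proof.
rewrite /catalan.
have := mul_bin_left k.+1.*2 k; rewrite (_ : k.+1.*2 - k = k.+2)%N; last by lia.
set A := 'C(_, k.+1); set B := 'C(_, k) => eAB.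
have -> : A = (k.+2 * (A - B))%N by nia.
rewrite mulKn //; nia.
Qed.

Section PolyCoefficients.
Variable R : comNzRingType.
Implicit Types a b : R.

Lemma coef_linear_exp a b m i :
  ((a%:P + b%:P * 'X) ^+ m)`_i = a ^+ (m - i) * b ^+ i *+ 'C(m, i).
Proof.
have -> : (a%:P + b%:P * 'X) ^+ m = \poly_(j < m.+1) (a ^+ (m - j) * b ^+ j *+ 'C(m, j)).
  rewrite exprDn poly_def; apply: eq_bigr => j _.
  by rewrite -polyC_exp exprMn -polyC_exp mulrA -polyCM mul_polyC scalerMnl.
rewrite coef_poly; case: ltnP => // lt_m_i.
by rewrite bin_small // mulr0n.
Qed.

Lemma coef_1addX_exp m i : ((1 + 'X) ^+ m : {poly R})`_i = ('C(m, i))%:R.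
Proof. by rewrite -polyC1 -[X in _ + X]mul1r coef_linear_exp !expr1n mulr1. Qed.

Lemma coef_catalan k : ((1 - 'X) * (1 + 'X) ^+ k.*2 : {poly R})`_k = (catalan k)%:R.
Proof.
rewrite mulrBl mul1r coefB coefXM !coef_1addX_exp.
case: k => [|k] //=; first by rewrite subr0.
by rewrite -catalanS_bin natrD addrK.
Qed.

Lemma coef_sum_sqr_bin_Xdouble n m :
  (\sum_(j < n.+1) 'X ^+ j.*2 * ('C(n, j) ^ 2)%:R : {poly R})`_m
  = if odd m then 0 else ('C(n, m./2) ^ 2)%:R.
Proof.
rewrite coef_sum.
under eq_bigr => j _ do rewrite mulr_natr coefMn coefXn.
have [odd_m | even_m] := boolP (odd m).
  rewrite big1 // => j _; case: eqP => [m_eq | _]; last by rewrite mul0rn.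
  by rewrite m_eq odd_double in odd_m.
have m_double : m = (m./2).*2 by rewrite -[LHS]odd_double_half (negPf even_m).
transitivity (\sum_(j < n.+1 | j == m./2 :> nat) ('C(n, j) ^ 2)%:R : R).
  rewrite [RHS]big_mkcond; apply: eq_bigr => j _; rewrite [in LHS]m_double (can_eq doubleK) eq_sym.
  by case: eqP => _; rewrite ?mulr1n ?mul0rn.
rewrite (big_ord1_eq _ (fun j => ('C(n, j) ^ 2)%:R)); case: ltnP => // lt_n.
by rewrite bin_small.
Qed.

Lemma coef_bivariate_expBn a n :
  ((a%:P * (1 + 'X) ^+ 2 - ((1 + a) ^+ 2)%:P * 'X) ^+ n)`_n
  = \sum_(i < n.+1)
      (-1) ^+ i * a ^+ (n - i) * (1 + a) ^+ i.*2 * ('C(n, i) * 'C((n - i).*2, n - i))%:R.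
Proof.
rewrite exprBn coef_sum; apply: eq_bigr => [[i /= lt_i_n]] _.
have le_i_n : (i <= n)%N by rewrite -ltnS.
have -> : ((-1) ^+ i * (a%:P * (1 + 'X) ^+ 2) ^+ (n - i) * (((1 + a) ^+ 2)%:P * 'X) ^+ i)
          *+ 'C(n, i)
        = (((-1) ^+ i * a ^+ (n - i) * (1 + a) ^+ i.*2) *+ 'C(n, i))%:P
          * ('X ^+ i * (1 + 'X) ^+ (n - i).*2).
  rewrite polyCMn !polyCM !polyC_exp polyCD polyC1 polyCN polyC1 -!mul2n !exprM.
  by rewrite mulrnAl !exprMn; congr (_ *+ _); ring.
rewrite coefCM coefXnM ltnNge le_i_n /= coef_1addX_exp natrM.
by rewrite mulr_natl mulrnAl -mulrnAr.
Qed.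

Lemma coef_factored_expMn a n :
  ((a%:P - 'X) ^+ n * (1 - a%:P * 'X) ^+ n)`_n
  = (-1) ^+ n * \sum_(j < n.+1) a ^+ j.*2 * ('C(n, j) ^ 2)%:R.
Proof.
rewrite coefMr mulr_sumr; apply: eq_bigr => [[j /= lt_j_n]] _.
have le_j_n : (j <= n)%N by rewrite -ltnS.
have -> : a%:P - 'X = a%:P + (-1)%:P * 'X by rewrite polyCN polyC1 mulN1r.
have -> : 1 - a%:P * 'X = 1%:P + (- a)%:P * 'X by rewrite polyCN polyC1 mulNr.
rewrite !coef_linear_exp subKn // bin_sub // expr1n mul1r [(- a) ^+ j]exprNn.
have -> : (-1) ^+ n = (-1) ^+ (n - j) * (-1) ^+ j :> R by rewrite -exprD subnK.
rewrite -addnn exprD mulrnAl [in LHS]mulrnAr -mulrnA [in RHS]mulr_natr [in RHS]mulrnAr -mulnn.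
by congr (_ *+ _); ring.
Qed.

Lemma sum_binomial_central_expansion a n :
  \sum_(i < n.+1)
      (-1) ^+ i * a ^+ (n - i) * (1 + a) ^+ i.*2 * ('C(n, i) * 'C((n - i).*2, n - i))%:R
  = (-1) ^+ n * \sum_(j < n.+1) a ^+ j.*2 * ('C(n, j) ^ 2)%:R.
Proof.
have factor : a%:P * (1 + 'X) ^+ 2 - ((1 + a) ^+ 2)%:P * 'X = (a%:P - 'X) * (1 - a%:P * 'X).
  by rewrite polyC_exp polyCD polyC1; ring.
by rewrite -coef_bivariate_expBn -coef_factored_expMn factor exprMn.
Qed.

Lemma coef_1subX_sum_sqr_bin n :
  ((1 - 'X) * ((-1) ^+ n * \sum_(j < n.+1) 'X ^+ j.*2 * ('C(n, j) ^ 2)%:R) : {poly R})`_n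
  = ('C(n, n./2) ^ 2)%:R.
Proof.
have -> : (-1) ^+ n = ((-1) ^+ n)%:P :> {poly R} by rewrite polyC_exp polyCN polyC1.
rewrite mulrBl mul1r coefB coefXM !coefCM !coef_sum_sqr_bin_Xdouble.
case: n => [|n] /=; first by rewrite subr0 mul1r.
rewrite -signr_odd /= uphalf_half.
by case: (odd n) => /=; rewrite ?mulr0 ?subr0 ?sub0r ?mul1r ?mulN1r ?opprK.
Qed.

End PolyCoefficients.

Theorem mainTheorem1 (n : nat) :
  \sum_(0 <= k < n.+1)
     (-1) ^+ k * ('C(n, k) * catalan k * 'C((n - k).*2, n - k))%:R
  = ('C(n, n./2) ^ 2)%:R :> int.
Proof.
rewrite -(coef_1subX_sum_sqr_bin int) -sum_binomial_central_expansion.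
rewrite big_mkord mulr_sumr coef_sum; apply: eq_bigr => [[k /= lt_k_n]] _.
set c := ('C(n, k) * 'C((n - k).*2, n - k))%N.
have -> : (1 - 'X) * ((-1) ^+ k * 'X ^+ (n - k) * (1 + 'X) ^+ k.*2 * c%:R)
          = ((-1) ^+ k * c%:R)%:P * ('X ^+ (n - k) * ((1 - 'X) * (1 + 'X) ^+ k.*2))
          :> {poly int}.
  by rewrite polyCM polyC_exp polyCN polyC1 polyC_natr; ring.
have le_k_n : (k <= n)%N by rewrite -ltnS.
rewrite coefCM coefXnM ltnNge leq_subr subKn // coef_catalan /c !natrM.
ring.
Qed.
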